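(* Let $\Sigma$ be a many-sorted signature and $S\subseteq\mathcal{S}_\Sigma$ with $|S|=1$. If a $\Sigma$-theory $\mathcal{T}$ has the finite model property with respect to $S$, then $\mathcal{T}$ is stably finite with respect to $S$.
   Context: A many-sorted signature $\Sigma$ has a countable set of sorts $\mathcal{S}_{\Sigma}$, countably many function and predicate symbols with arities over these sorts, and an equality symbol for each sort (interpreted as identity). A $\Sigma$-interpretation $\mathcal{A}$ is a $\Sigma$-structure (domain $\sigma^{\mathcal{A}}$ for each sort $\sigma$) together with values for all variables. A $\Sigma$-theory $\mathcal{T}$ is the class of all $\Sigma$-interpretations (the $\mathcal{T}$-interpretations) satisfying a given set of closed formulas; a formula is $\mathcal{T}$-satisfiable if some $\mathcal{T}$-interpretation satisfies it. $\mathcal{T}$ has the finite model property w.r.t. $S$ if every $\mathcal{T}$-satisfiable quantifier-free $\Sigma$-formula is satisfied by some $\mathcal{T}$-interpretation $\mathcal{A}$ with $\sigma^{\mathcal{A}}$ finite for each $\sigma\in S$. $\mathcal{T}$ is stably finite w.r.t. $S$ if for every quantifier-free $\Sigma$-formula $\phi$ and every $\mathcal{T}$-interpretation $\mathcal{A}$ satisfying $\phi$ there is a $\mathcal{T}$-interpretation $\mathcal{B}$ satisfying $\phi$ with $|\sigma^{\mathcal{B}}|$ finite and $|\sigma^{\mathcal{B}}|\le|\sigma^{\mathcal{A}}|$ for each $\sigma\in S$. *)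

From Stdlib Require Import List.
Import ListNotations.
Set Implicit Arguments.
Unset Strict Implicit.

Definition countable (X : Type) : Prop :=
  exists f : X -> nat, forall x y, f x = f y -> x = y.

Record signature := {
  sort : Type;
  fsym : Type;
  psym : Type;
  fdom : fsym -> list sort;
  fcod : fsym -> sort;
  pdom : psym -> list sort;
  sort_countable : countable sort;
  fsym_countable : countable fsym;
  psym_countable : countable psym
}.
Arguments fdom {_} _.
Arguments fcod {_} _.
Arguments pdom {_} _.

Section Syntax.
Variable Sig : signature.

Inductive term : sort Sig -> Type :=
| Var : forall (s : sort Sig), nat -> term s
| App : forall (f : fsym Sig), terms (fdom f) -> term (fcod f)
with terms : list (sort Sig) -> Type :=
| tnil : terms []
| tcons : forall (s : sort Sig) (l : list (sort Sig)), term s -> terms l -> terms (s :: l).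

Inductive formula : Type :=
| FEq : forall s : sort Sig, term s -> term s -> formula
| FPred : forall p : psym Sig, terms (pdom p) -> formula
| FTrue : formula
| FFalse : formula
| FNot : formula -> formula
| FAnd : formula -> formula -> formula
| FOr : formula -> formula -> formula
| FImp : formula -> formula -> formula
| FForall : sort Sig -> nat -> formula -> formula
| FExists : sort Sig -> nat -> formula -> formula.

Fixpoint quantifier_free (phi : formula) : Prop :=
  match phi with
  | FEq _ _ | FPred _ | FTrue | FFalse => True
  | FNot a => quantifier_free a
  | FAnd a b | FOr a b | FImp a b => quantifier_free a /\ quantifier_free b
  | FForall _ _ _ | FExists _ _ _ => False
  end.

Fixpoint term_has_var (s : sort Sig) (n : nat) (s' : sort Sig) (t : term s') : Prop :=
  match t with
  | Var s0 m => s0 = s /\ m = n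
  | App ts => terms_have_var s n ts
  end
with terms_have_var (s : sort Sig) (n : nat) (l : list (sort Sig)) (ts : terms l) : Prop :=
  match ts with
  | tnil => False
  | tcons t ts' => term_has_var s n t \/ terms_have_var s n ts'
  end.

Fixpoint free_in (s : sort Sig) (n : nat) (phi : formula) : Prop :=
  match phi with
  | FEq t u => term_has_var s n t \/ term_has_var s n u
  | FPred ts => terms_have_var s n ts
  | FTrue | FFalse => False
  | FNot a => free_in s n a
  | FAnd a b | FOr a b | FImp a b => free_in s n a \/ free_in s n b
  | FForall s' m a | FExists s' m a => free_in s n a /\ ~ (s' = s /\ m = n)
  end.

Definition closed (phi : formula) : Prop := forall s n, ~ free_in s n phi.

Fixpoint hlist (D : sort Sig -> Type) (l : list (sort Sig)) : Type :=
  match l with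
  | [] => unit
  | s :: l' => (D s * hlist D l')%type
  end.

Record structure := {
  dom : sort Sig -> Type;
  dom_nonempty : forall s, inhabited (dom s);
  finterp : forall f : fsym Sig, hlist dom (fdom f) -> dom (fcod f);
  pinterp : forall p : psym Sig, hlist dom (pdom p) -> Prop
}.

Definition valuation (M : structure) := forall s : sort Sig, nat -> dom M s.

Fixpoint eval_term (M : structure) (v : valuation M) (s : sort Sig) (t : term s)
  : dom M s :=
  match t in term s return dom M s with
  | Var s0 m => v s0 m
  | @App f ts => @finterp M f (eval_terms v ts)
  end
with eval_terms (M : structure) (v : valuation M) (l : list (sort Sig)) (ts : terms l)
  : hlist (dom M) l :=
  match ts in terms l return hlist (dom M) l with
  | tnil => tt
  | tcons t ts' => (eval_term v t, eval_terms v ts')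
  end.

Definition agree_except (M : structure) (s : sort Sig) (n : nat) (v v' : valuation M) : Prop :=
  forall s' m, ~ (s' = s /\ m = n) -> v' s' m = v s' m.

Fixpoint sat (M : structure) (v : valuation M) (phi : formula) : Prop :=
  match phi with
  | FEq t u => eval_term v t = eval_term v u
  | @FPred p ts => @pinterp M p (eval_terms v ts)
  | FTrue => True
  | FFalse => False
  | FNot a => ~ sat v a
  | FAnd a b => sat v a /\ sat v b
  | FOr a b => sat v a \/ sat v b
  | FImp a b => sat v a -> sat v b
  | FForall s n a => forall v' : valuation M, agree_except s n v v' -> sat v' a
  | FExists s n a => exists v' : valuation M, agree_except s n v v' /\ sat v' a
  end.

(** A Sigma-theory: the class of interpretations satisfying a given set of
    closed formulas (the axioms). *)
Record theory := {
  axioms : formula -> Prop;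
  axioms_closed : forall phi, axioms phi -> closed phi
}.

(** A Sigma-interpretation is a pair (M, v). *)
Definition T_interp (T : theory) (M : structure) (v : valuation M) : Prop :=
  forall psi, axioms T psi -> sat v psi.

Definition T_satisfiable (T : theory) (phi : formula) : Prop :=
  exists (M : structure) (v : valuation M), T_interp T v /\ sat v phi.

End Syntax.

Arguments Var {Sig} s _.
Arguments tnil {Sig}.

Definition finite_type (X : Type) : Prop := exists l : list X, forall x, In x l.
Definition card_le (X Y : Type) : Prop :=
  exists f : X -> Y, forall x y, f x = f y -> x = y.

Definition has_fmp (Sig : signature) (T : theory Sig) (S : sort Sig -> Prop) : Prop :=
  forall phi : formula Sig, quantifier_free phi -> T_satisfiable T phi ->
    exists (M : structure Sig) (v : valuation M),
      T_interp T v /\ sat v phi /\ forall s, S s -> finite_type (dom M s).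

Definition stably_finite (Sig : signature) (T : theory Sig) (S : sort Sig -> Prop) : Prop :=
  forall phi : formula Sig, quantifier_free phi ->
  forall (A : structure Sig) (vA : valuation A), T_interp T vA -> sat vA phi ->
    exists (B : structure Sig) (vB : valuation B),
      T_interp T vB /\ sat vB phi /\
      forall s, S s -> finite_type (dom B s) /\ card_le (dom B s) (dom A s).

(* With a single distinguished sort s0 there are only two cases. If the given
   model is finite at s0, it is itself the required small finite model. If it
   is infinite at s0, the finite model provided by the finite model property
   is automatically no larger there, since every finite set injects into an
   infinite one. *)

From Stdlib Require Import List Classical ClassicalEpsilon.

Lemma card_le_refl (X : Type) : card_le X X.
Proof. exists (fun x => x); auto. Qed.

Lemma infinite_fresh {Y : Type} (ys : list Y) :
  ~ finite_type Y -> exists y, ~ In y ys.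
Proof.
  intro HY; apply not_all_ex_not; intro Hall.
  apply HY; exists ys; exact Hall.
Qed.

Lemma injective_on_list_into_infinite {X Y : Type} (l : list X) :
  ~ finite_type Y ->
  exists f : X -> Y, forall x y, In x l -> In y l -> f x = f y -> x = y.
Proof.
  intro HY; induction l as [|a l IH].
  - destruct (infinite_fresh nil HY) as [y _].
    exists (fun _ => y); intros x x' [].
  - destruct IH as [f Hf].
    destruct (infinite_fresh (map f l) HY) as [y0 Hy0].
    (* send [a] to a value outside [f] of the tail; [f] is kept elsewhere *)
    exists (fun x => if excluded_middle_informative (x = a) then y0 else f x).
    intros x y Hx Hy.
    destruct (excluded_middle_informative (x = a)) as [-> | Hxa];
      destruct (excluded_middle_informative (y = a)) as [-> | Hya];
      intro Hfxy; auto.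
    + destruct Hy as [-> | Hy]; [contradiction|].
      exfalso; apply Hy0; rewrite Hfxy; apply in_map; exact Hy.
    + destruct Hx as [-> | Hx]; [contradiction|].
      exfalso; apply Hy0; rewrite <- Hfxy; apply in_map; exact Hx.
    + destruct Hx as [-> | Hx]; [contradiction|].
      destruct Hy as [-> | Hy]; [contradiction|].
      auto.
Qed.

Lemma card_le_finite_infinite {X Y : Type} :
  finite_type X -> ~ finite_type Y -> card_le X Y.
Proof.
  intros [l Hl] HY.
  destruct (injective_on_list_into_infinite l HY) as [f Hf].
  exists f; intros x y; apply Hf; apply Hl.
Qed.

Theorem theorem4 (Sig : signature) (S : sort Sig -> Prop) (T : theory Sig) :
  (exists s0 : sort Sig, forall s, S s <-> s = s0) ->
  has_fmp T S -> stably_finite T S.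
Proof.
  intros [s0 HS] Hfmp phi Hqf A vA HA Hsat.
  destruct (classic (finite_type (dom A s0))) as [HAfin | HAinf].
  - exists A, vA; split; [exact HA | split; [exact Hsat |]].
    intros s Hs; apply HS in Hs as ->.
    split; [exact HAfin | apply card_le_refl].
  - destruct (Hfmp phi Hqf (ex_intro _ A (ex_intro _ vA (conj HA Hsat))))
      as [B [vB [HB [HBsat HBfin]]]].
    exists B, vB; split; [exact HB | split; [exact HBsat |]].
    intros s Hs; pose proof (HBfin s Hs) as HBs; apply HS in Hs as ->.
    split; [exact HBs | exact (card_le_finite_infinite HBs HAinf)].
Qed.
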